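(* Let $(\boldsymbol X(t))_{t\in\mathbb Z}$ be a $d$-variate weakly stationary process with $\mathbb E\boldsymbol X(t)=0$, let $a,b\in\{1,\ldots,d\}$, and assume $\sum_{u=-\infty}^\infty|u||\gamma_{jj}(u)|<\infty$ for $j=a,b$. Let $n\in\mathbb N$ and $k\in\{0,\ldots,n-1\}$. Then $$d_{\mathrm W}\Big(\mathcal L\big(n^{1/2}(\tilde\gamma_{ab}(k)-\gamma_{ab}(k))\big),\mathcal L\big(n^{1/2}(\hat\gamma_{ab}(k)-\gamma_{ab}(k))\big)\Big)\le n^{-1/2}\Big(\sum_{u=-\infty}^\infty|\gamma_{aa}(u)|\Big)^{1/2}\Big(\sum_{u=-\infty}^\infty|\gamma_{bb}(u)|\Big)^{1/2}$$ $$+\frac{|k|}{n^{3/2}}\Big(\sum_{u=-\infty}^\infty|\gamma_{aa}(u)|+\frac1n\sum_{u=-\infty}^\infty|u||\gamma_{aa}(u)|\Big)^{1/2}\Big(\sum_{u=-\infty}^\infty|\gamma_{bb}(u)|+\frac1n\sum_{u=-\infty}^\infty|u||\gamma_{bb}(u)|\Big)^{1/2}.$$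
   Context: $\gamma_{ab}(k):=\mathbb E[X_a(t+k)X_b(t)]$. With $\bar X_j:=\frac1n\sum_{t=1}^nX_j(t)$, $\tilde\gamma_{ab}(k):=\frac1n\sum_{t=1}^{n-k}(X_a(t+k)-\bar X_a)(X_b(t)-\bar X_b)$ and $\hat\gamma_{ab}(k):=\frac1n\sum_{t=1}^{n-k}X_a(t+k)X_b(t)$. $d_{\mathrm W}(\mathcal L(U),\mathcal L(V)):=\sup_h|\mathbb Eh(U)-\mathbb Eh(V)|$ over all 1-Lipschitz $h:\mathbb R\to\mathbb R$. *)

From HB Require Import structures.
From mathcomp Require Import all_boot all_order all_algebra.
From mathcomp Require Import all_classical all_reals all_analysis.
Set Implicit Arguments. Unset Strict Implicit. Unset Printing Implicit Defensive.
Import Order.TTheory GRing.Theory Num.Theory.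
Local Open Scope classical_set_scope.
Local Open Scope ring_scope.

Section defs.
Context {dT : measure_display} {T : measurableType dT} {R : realType}
  (P : probability T R) {d : nat}.

(* A d-variate process indexed by Z: X t j is the j-th coordinate at time t. *)
Definition process := int -> 'I_d -> T -> R.

Definition weakly_stationary_centred (X : process) : Prop :=
  [/\ (forall t j, measurable_fun setT (X t j)),
      (forall t j, P.-integrable setT (fun w => (X t j w ^+ 2)%:E)),
      (forall t j, ('E_P[X t j] = 0)%E) &
      (forall (a b : 'I_d) (t u : int), ('E_P[fun w => (X (t + u) a w * X t b w)%R]
                       = 'E_P[fun w => (X u a w * X 0 b w)%R])%E)].

Definition acov (X : process) (a b : 'I_d) (k : int) : R :=
  fine ('E_P[fun w => (X k a w * X 0 b w)%R])%E.

Definition smean (X : process) (n : nat) (j : 'I_d) : T -> R :=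
  fun w => n%:R^-1 * \sum_(1 <= t < n.+1) X t%:Z j w.

Definition acov_tilde (X : process) (n : nat) (a b : 'I_d) (k : nat) : T -> R :=
  fun w => n%:R^-1 * \sum_(1 <= t < (n - k).+1)
     ((X (t + k)%:Z a w - smean X n a w) * (X t%:Z b w - smean X n b w)).

Definition acov_hat (X : process) (n : nat) (a b : 'I_d) (k : nat) : T -> R :=
  fun w => n%:R^-1 * \sum_(1 <= t < (n - k).+1) (X (t + k)%:Z a w * X t%:Z b w).

End defs.

Definition dW {dT : measure_display} {T : measurableType dT} {R : realType}
  (P : probability T R) (U V : T -> R) : \bar R :=
  ereal_sup [set (`| 'E_P[h \o U] - 'E_P[h \o V] |)%E
            | h in [set h : R -> R | forall x y, `|h x - h y| <= `|x - y|]].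

Definition Zsum {R : realType} (g : int -> R) : R :=
  g 0 + limn (fun N : nat => \sum_(1 <= u < N) (g u%:Z + g (- u%:Z))).

Definition Zabs_summable {R : realType} (g : int -> R) : Prop :=
  cvgn (fun N : nat => \sum_(1 <= u < N) (`|g u%:Z| + `|g (- u%:Z)|)).

From HB Require Import structures.
From mathcomp Require Import all_boot all_order all_algebra.
From mathcomp Require Import all_classical all_reals all_analysis.
From mathcomp Require Import ring lra zify.
Import Order.TTheory GRing.Theory Num.Theory measurable_realfun.
Import numFieldNormedType.Exports.
Set Implicit Arguments. Unset Strict Implicit. Unset Printing Implicit Defensive.
Local Open Scope classical_set_scope.
Local Open Scope ring_scope.

(* Write m = n - k, let A and B be the averages of the m terms X_a(t+k) and X_b(t)
   summed in \hat\gamma_ab(k), and F = \bar X_a - A, G = \bar X_b - B.  Expanding the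
   centred products gives \tilde\gamma_ab(k) - \hat\gamma_ab(k) = (m/n) (F G - A B).
   Each of F, G, A, B is a linear form \sum_t c_t X_j(t), whose second moment is at most
   (\sum_t c_t^2) \sum_u |\gamma_jj(u)| by stationarity; here \sum_t c_t^2 is k/(n m) for
   F and G and 1/m for A and B.  Since d_W(U, V) <= E|U - V| for variables on a common
   space, Cauchy-Schwarz bounds the distance by
   n^{-1/2} (1 + k/n) (\sum_u |\gamma_aa(u)|)^{1/2} (\sum_u |\gamma_bb(u)|)^{1/2},
   which is below the stated bound: the sums \sum_u |u| |\gamma_jj(u)| only enter through
   their nonnegativity and their convergence, which implies that of \sum_u |\gamma_jj(u)|. *)

Section mean.
Context dT (T : measurableType dT) (R : realType) (P : probability T R).
Implicit Types f g : T -> R.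

(* Only meaningful for [f \in Lfun P 1]: [fine] sends infinite expectations to 0. *)
Definition mean f : R := fine 'E_P[f].

Lemma Lfun_sum p (I : Type) (s : seq I) (F : I -> T -> R) : (1 <= p)%E ->
  (forall i, F i \in Lfun P p) -> (fun w => \sum_(i <- s) F i w) \in Lfun P p.
Proof.
move=> p1 FP; rewrite -(fct_sumE s xpredT F).
by apply: rpred_sum => i _; exact: FP.
Qed.

Lemma LfunZ p c f : (1 <= p)%E ->
  f \in Lfun P p -> (fun w => c * f w) \in Lfun P p.
Proof. by move=> p1 fp; exact: rpredZ. Qed.

Lemma LfunB p f g : (1 <= p)%E ->
  f \in Lfun P p -> g \in Lfun P p -> (fun w => f w - g w) \in Lfun P p.
Proof. by move=> p1 fp gp; exact: rpredB. Qed.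

Lemma Lfun_measurable p f : f \in Lfun P p -> measurable_fun setT f.
Proof. by case/andP; rewrite inE. Qed.

Lemma Lfun1_le f g : measurable_fun setT f -> (forall w, `|f w| <= g w) ->
  g \in Lfun P 1 -> f \in Lfun P 1.
Proof.
move=> mf fg /Lfun1_integrable ig; apply/Lfun1_integrable.
apply: le_integrable ig => //; first exact/measurable_EFinP.
by move=> w _ /=; rewrite lee_fin (le_trans (fg w)) ?ler_norm.
Qed.

Lemma integrable_sqr_Lfun2 f : measurable_fun setT f ->
  P.-integrable setT (fun w => (f w ^+ 2)%:E) -> f \in Lfun P 2%:E.
Proof.
move=> mf /integrableP [_ fint]; rewrite inE; apply/andP; split; first by rewrite inE.
rewrite !inE /= /finite_norm unlock /Lnorm poweR_lty //.
apply: le_lt_trans fint; rewrite le_eqVlt; apply/orP; left; apply/eqP.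
apply: eq_integral => w _ /=.
by rewrite powR_mulrn // normrX.
Qed.

Lemma meanE f : f \in Lfun P 1 -> ('E_P[f] = (mean f)%:E)%E.
Proof. by move=> f1; rewrite fineK // expectation_fin_num. Qed.

Lemma meanD f g : f \in Lfun P 1 -> g \in Lfun P 1 ->
  mean (fun w => f w + g w) = mean f + mean g.
Proof.
move=> f1 g1; rewrite /mean (_ : (fun w => _) = f \+ g) // expectationD //.
by rewrite fineD // expectation_fin_num.
Qed.

Lemma meanZ f c : f \in Lfun P 1 -> mean (fun w => c * f w) = c * mean f.
Proof.
move=> f1; rewrite /mean (_ : (fun w => _) = c \o* f); last first.
  by apply: funext => w /=; rewrite mulrC.
by rewrite expectationZl // fineM // expectation_fin_num.
Qed.

Lemma meanB f g : f \in Lfun P 1 -> g \in Lfun P 1 ->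
  mean (fun w => f w - g w) = mean f - mean g.
Proof.
move=> f1 g1; rewrite /mean (_ : (fun w => _) = f \- g) // expectationB //.
by rewrite fineB // expectation_fin_num.
Qed.

Lemma mean_sum (I : Type) (s : seq I) (F : I -> T -> R) :
  (forall i, F i \in Lfun P 1) ->
  mean (fun w => \sum_(i <- s) F i w) = \sum_(i <- s) mean (F i).
Proof.
move=> F1; elim: s => [|i s IH].
  by rewrite big_nil /mean (_ : (fun _ => _) = cst 0) ?expectation_cst //;
    apply: funext => w; rewrite big_nil.
rewrite big_cons -IH -meanD ?Lfun_sum //.
by congr mean; apply: funext => w; rewrite big_cons.
Qed.

Lemma mean_ge0 f : (forall w, 0 <= f w) -> 0 <= mean f.
Proof. by move=> f0; rewrite fine_ge0 // expectation_ge0. Qed.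

Lemma ler_mean f g : f \in Lfun P 1 -> g \in Lfun P 1 ->
  (forall w, f w <= g w) -> mean f <= mean g.
Proof.
move=> f1 g1 fg; rewrite -subr_ge0 -meanB //.
by apply: mean_ge0 => w; rewrite subr_ge0.
Qed.

Lemma ler_norm_mean f : f \in Lfun P 1 -> `|mean f| <= mean (fun w => `|f w|).
Proof.
move=> f1; have nf1 : (fun w => `|f w|) \in Lfun P 1 by exact: Lfun_norm.
rewrite ler_norml; apply/andP; split; last by apply: ler_mean => // w; exact: ler_norm.
rewrite -mulN1r -meanZ //; apply: ler_mean => //; first exact: LfunZ.
by move=> w; rewrite mulN1r; exact: lerNnormlW.
Qed.

Lemma mean_normB_le f g : f \in Lfun P 1 -> g \in Lfun P 1 ->
  mean (fun w => `|f w - g w|) <= mean (fun w => `|f w|) + mean (fun w => `|g w|).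
Proof.
move=> f1 g1; rewrite -meanD ?Lfun_norm //.
apply: ler_mean => [||w]; last exact: ler_normB.
- exact/Lfun_norm/LfunB.
- by apply: rpredD; exact: Lfun_norm.
Qed.

Lemma Lnorm2E f : f \in Lfun P 2%:E ->
  ('N[P]_2%:E[EFin \o f] = (Num.sqrt (mean (fun w => f w ^+ 2)))%:E)%E.
Proof.
move=> f2; have f21 : (fun w => f w ^+ 2) \in Lfun P 1.
  by apply/Lfun1_integrable; exact: Lfun2_integrable_sqr.
rewrite unlock /Lnorm -powR12_sqrt ?mean_ge0 // => [|w]; last exact: sqr_ge0.
rewrite -poweR_EFin -meanE // unlock; congr (_ `^ _)%E.
apply: eq_integral => w _ /=.
by rewrite powR_mulrn // real_normK ?num_real.
Qed.

Lemma mean_normM_le f g : f \in Lfun P 2%:E -> g \in Lfun P 2%:E ->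
  mean (fun w => `|f w * g w|)
  <= Num.sqrt (mean (fun w => f w ^+ 2)) * Num.sqrt (mean (fun w => g w ^+ 2)).
Proof.
move=> f2 g2; have fg1 : (fun w => `|f w * g w|) \in Lfun P 1.
  exact/Lfun_norm/Lfun2_mul_Lfun1.
have := hoelder P (Lfun_measurable f2) (Lfun_measurable g2) (ltr0Sn R 1) (ltr0Sn R 1).
have half : 2^-1 + 2^-1 = 1 :> R by lra.
rewrite Lnorm1 !Lnorm2E // -EFinM => /(_ half).
rewrite -lee_fin; apply: le_trans; rewrite -meanE // unlock.
exact: lexx.
Qed.

End mean.

Lemma lipschitz1_continuous (R : realType) (h : R -> R) :
  (forall x y, `|h x - h y| <= `|x - y|) -> continuous h.
Proof.
move=> hlip x; apply/cvgrPdist_lt => e e0; near=> y.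
by apply: le_lt_trans (hlip x y) _; near: y; exact: cvgr_dist_lt.
Unshelve. all: by end_near. Qed.

Lemma dW_le_mean_abs dT (T : measurableType dT) (R : realType) (P : probability T R)
    (U V : T -> R) : U \in Lfun P 1 -> V \in Lfun P 1 ->
  (dW P U V <= (mean P (fun w => `|U w - V w|))%:E)%E.
Proof.
move=> U1 V1; apply: ge_ereal_sup => _ [h hlip <-].
have mh : measurable_fun setT h := continuous_measurable_fun (lipschitz1_continuous hlip).
have hcomp1 f : f \in Lfun P 1 -> h \o f \in Lfun P 1.
  move=> f1; apply: (Lfun1_le (g := fun w => `|h 0| + `|f w|)).
  - exact: measurableT_comp mh (Lfun_measurable f1).
  - move=> w /=; have := hlip (f w) 0; rewrite subr0 => hle.
    rewrite -[h (f w)](subrK (h 0)) (le_trans (ler_normD _ _)) //.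
    by rewrite addrC lerD2l.
  - by apply: rpredD; [exact: Lfun_cst | exact: Lfun_norm].
rewrite !meanE ?hcomp1 // -EFinB /= lee_fin -meanB ?hcomp1 //.
apply: le_trans (ler_norm_mean _) _; first by apply: LfunB; rewrite ?hcomp1.
apply: ler_mean => [||w]; last exact: hlip.
- by apply/Lfun_norm/LfunB; rewrite ?hcomp1.
- exact/Lfun_norm/LfunB.
Qed.

Section Zsum.
Variable R : realType.
Implicit Types g : int -> R.

Definition Zabs_partial g (N : nat) : R :=
  \sum_(1 <= u < N) (`|g u%:Z| + `|g (- u%:Z)|).

Lemma nondecreasing_Zabs_partial g : nondecreasing_seq (Zabs_partial g).
Proof.
apply/nondecreasing_seqP => -[|N]; first by rewrite /Zabs_partial !big_geq.
by rewrite /Zabs_partial [leRHS]big_nat_recr //= lerDl addr_ge0.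
Qed.

Definition Zwindow (m : nat) : seq int :=
  0 :: [seq Posz u | u <- iota 1 m] ++ [seq - Posz u | u <- iota 1 m].

Lemma Zwindow_sum g m :
  \sum_(u <- Zwindow m) `|g u| = `|g 0| + Zabs_partial g m.+1.
Proof.
rewrite /Zwindow big_cons big_cat !big_map /Zabs_partial /index_iota subSS subn0.
by rewrite big_split.
Qed.

Lemma Zwindow_uniq m : uniq (Zwindow m).
Proof.
rewrite /Zwindow /= cat_uniq !map_inj_uniq ?iota_uniq //; last 2 first.
- by move=> x y /oppr_inj [].
- by move=> x y [].
rewrite mem_cat negb_or /= andbT -andbA; apply/and3P; split.
- by apply/negP => /mapP [x]; rewrite mem_iota => /andP [x1 _] /eqP; lia.
- by apply/negP => /mapP [x]; rewrite mem_iota => /andP [x1 _] /eqP; lia.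
- apply/hasPn => _ /mapP [z + ->]; rewrite mem_iota => /andP [z1 _].
  by apply/negP => /mapP [x]; rewrite mem_iota => /andP [x1 _] /eqP; lia.
Qed.

Lemma mem_Zwindow m (u : int) : (`|u| <= m)%N -> u \in Zwindow m.
Proof.
rewrite inE mem_cat; case: u => [[|p]|p] um //; apply/or3P; [apply: Or32 | apply: Or33];
  apply/mapP; exists p.+1; rewrite ?mem_iota //; lia.
Qed.

Lemma ler_psum_subset (I : eqType) (s s' : seq I) (F : I -> R) :
  uniq s -> uniq s' -> {subset s <= s'} -> (forall i, 0 <= F i) ->
  \sum_(i <- s) F i <= \sum_(i <- s') F i.
Proof.
move=> us us' ss' F0; rewrite [leRHS](bigID (mem s)) /=.
have -> : \sum_(i <- s' | i \in s) F i = \sum_(i <- s) F i.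
  rewrite -big_filter; apply: perm_big; apply: uniq_perm; rewrite ?filter_uniq // => i.
  by rewrite mem_filter; case si : (i \in s) => //=; rewrite ss'.
by rewrite lerDl sumr_ge0.
Qed.

Lemma ler_sum_Zsum g (s : seq int) : Zabs_summable g -> uniq s ->
  \sum_(u <- s) `|g u| <= Zsum (fun u => `|g u|).
Proof.
move=> gs us; set m := \max_(u <- s) `|u|%N.
apply: (le_trans (ler_psum_subset us (Zwindow_uniq m) _ _)) => //.
  by move=> u su; apply/mem_Zwindow/(@leq_bigmax_seq _ s xpredT (fun v => `|v|%N)).
rewrite Zwindow_sum lerD2l.
exact: nondecreasing_cvgn_le (nondecreasing_Zabs_partial g) gs _.
Qed.

Lemma Zsum_abs_ge0 g : Zabs_summable g -> 0 <= Zsum (fun u => `|g u|).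
Proof. by move=> gs; have := @ler_sum_Zsum g [::] gs isT; rewrite big_nil. Qed.

Lemma ler_sum_inj_Zsum g (f : nat -> int) (s : seq nat) :
  Zabs_summable g -> injective f -> uniq s ->
  \sum_(u <- s) `|g (f u)| <= Zsum (fun u => `|g u|).
Proof.
move=> gs f_inj us; rewrite -(big_map f xpredT (fun v => `|g v|)).
by apply: ler_sum_Zsum; rewrite // map_inj_uniq.
Qed.

Lemma Zabs_summable_weighted g :
  Zabs_summable (fun u => `|u|%:~R * g u) -> Zabs_summable g.
Proof.
move=> wgs; apply: nondecreasing_is_cvgn (nondecreasing_Zabs_partial g) _.
have wg_nd := nondecreasing_Zabs_partial (fun u => `|u|%:~R * g u).
exists (limn (Zabs_partial (fun u => `|u|%:~R * g u))) => _ [N _ <-].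
apply: le_trans (nondecreasing_cvgn_le wg_nd wgs N).
apply: ler_sum_nat => u /andP [u1 _]; rewrite !normrM.
have absz_ge1 (x : int) : x != 0 -> 1 <= `|(`|x|)%:~R : R|.
  by move=> x0; rewrite ger0_norm ?ler0z // ler1z; lia.
by apply: lerD; rewrite ler_peMl // absz_ge1 //; lia.
Qed.

Lemma Zsum_weighted_ge0 g :
  Zabs_summable (fun u => `|u|%:~R * g u) -> 0 <= Zsum (fun u => `|u|%:~R * `|g u|).
Proof.
move=> wgs; have -> : (fun u => `|u|%:~R * `|g u|) = (fun u => `|(`|u|%:~R * g u)|).
  by apply/funext => u; rewrite normrM ger0_norm // ler0z.
exact: Zsum_abs_ge0.
Qed.

End Zsum.

Lemma mulr_le_sqr_half (R : realFieldType) (x y z : R) :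
  x * y * z <= x ^+ 2 / 2 * `|z| + y ^+ 2 / 2 * `|z|.
Proof.
rewrite -mulrDl; apply: le_trans (ler_norm _) _; rewrite normrM ler_wpM2r //.
have := (leif_mean_square_scaled `|x| `|y|).1.
by rewrite normrM mulr2n !real_normK ?num_real //; lra.
Qed.

Section linear_forms.
Context dT (T : measurableType dT) (R : realType) (P : probability T R).
Variables (d : nat) (X : int -> 'I_d -> T -> R).
Hypothesis HX : weakly_stationary_centred P X.

Definition lincomb (s : seq nat) (c : nat -> R) (j : 'I_d) (w : T) : R :=
  \sum_(t <- s) c t * X t%:Z j w.

Lemma process_Lfun2 t j : X t j \in Lfun P 2%:E.
Proof. by case: HX => mX iX _ _; exact: integrable_sqr_Lfun2. Qed.

Lemma lincomb_Lfun2 s c j : lincomb s c j \in Lfun P 2%:E.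
Proof.
apply: Lfun_sum => [|t]; first exact: lee1n.
by apply: LfunZ; [exact: lee1n | exact: process_Lfun2].
Qed.

Lemma mean_process_mul j (s t : int) :
  mean P (fun w => X s j w * X t j w) = acov P X j j (s - t).
Proof.
case: HX => _ _ _ stat; rewrite /acov /mean -(stat j j t (s - t)).
by rewrite addrC subrK.
Qed.

Lemma mean_lincomb_sqr j s c :
  mean P (fun w => lincomb s c j w ^+ 2)
  = \sum_(t <- s) \sum_(u <- s) c t * c u * acov P X j j (t%:Z - u%:Z).
Proof.
have XX2 t u : (fun w => X t%:Z j w * X u%:Z j w) \in Lfun P 1.
  by apply: Lfun2_mul_Lfun1; exact: process_Lfun2.
rewrite (_ : (fun w => _) = fun w => \sum_(t <- s) \sum_(u <- s)
    c t * c u * (X t%:Z j w * X u%:Z j w)); last first.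
  apply: funext => w; rewrite expr2 /lincomb mulr_suml; apply: eq_bigr => t _.
  by rewrite mulr_sumr; apply: eq_bigr => u _; ring.
rewrite mean_sum => [|t]; last by apply: Lfun_sum => // u; exact: LfunZ.
apply: eq_bigr => t _; rewrite mean_sum => [|u]; last exact: LfunZ.
by apply: eq_bigr => u _; rewrite meanZ ?mean_process_mul.
Qed.

Lemma mean_lincomb_sqr_le j s c : uniq s -> Zabs_summable (acov P X j j) ->
  mean P (fun w => lincomb s c j w ^+ 2)
  <= (\sum_(t <- s) c t ^+ 2) * Zsum (fun u => `|acov P X j j u|).
Proof.
move=> us gs; rewrite mean_lincomb_sqr; set C := Zsum _; set g := acov P X j j.
have row_le (f : nat -> int) t : injective f ->
    \sum_(u <- s) c t ^+ 2 / 2 * `|g (f u)| <= c t ^+ 2 / 2 * C.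
  by move=> f_inj; rewrite -mulr_sumr ler_wpM2l ?ler_sum_inj_Zsum // mulr_ge0 ?sqr_ge0.
apply: le_trans (ler_sum _ (fun t _ => ler_sum _ (fun u _ => mulr_le_sqr_half _ _ _))) _.
under eq_bigr => t _ do rewrite big_split /=.
rewrite big_split /= [X in _ + X]exchange_big /=.
apply: le_trans (lerD (ler_sum _ (fun t _ => row_le (fun u => t%:Z - u%:Z) t _))
                      (ler_sum _ (fun u _ => row_le (fun t => t%:Z - u%:Z) u _))) _.
- by move=> t _ u v /=; lia.
- by move=> u _ t v /=; lia.
rewrite -big_split mulr_suml le_eqVlt; apply/orP; left.
by apply/eqP/eq_bigr => t _; rewrite /= -mulrDl -splitr.
Qed.

Lemma mean_abs_lincomb_mul_le s c c' a b q :
  uniq s -> Zabs_summable (acov P X a a) -> Zabs_summable (acov P X b b) ->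
  \sum_(t <- s) c t ^+ 2 = q -> \sum_(t <- s) c' t ^+ 2 = q ->
  mean P (fun w => `|lincomb s c a w * lincomb s c' b w|)
  <= q * (Num.sqrt (Zsum (fun u => `|acov P X a a u|))
          * Num.sqrt (Zsum (fun u => `|acov P X b b u|))).
Proof.
move=> us sa sb cq c'q; have q0 : 0 <= q by rewrite -cq sumr_ge0 // => t _; exact: sqr_ge0.
apply: le_trans (mean_normM_le (lincomb_Lfun2 _ _ _) (lincomb_Lfun2 _ _ _)) _.
apply: le_trans (ler_pM (sqrtr_ge0 _) (sqrtr_ge0 _)
  (ler_wsqrtr (mean_lincomb_sqr_le c us sa)) (ler_wsqrtr (mean_lincomb_sqr_le c' us sb))) _.
by rewrite cq c'q !sqrtrM // mulrACA -expr2 sqr_sqrtr.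
Qed.

End linear_forms.

Section weighted_sums.
Context {R : numFieldType}.

Lemma sumr_centred_mul (I : Type) (s : seq I) (x y : I -> R) (c e : R) :
  \sum_(i <- s) (x i - c) * (y i - e) = \sum_(i <- s) x i * y i
    - e * \sum_(i <- s) x i - c * \sum_(i <- s) y i + (size s)%:R * c * e.
Proof.
elim: s => [|i s IH]; first by rewrite !big_nil /=; ring.
by rewrite !big_cons IH /= -add1n natrD; ring.
Qed.

Definition block (p m t : nat) : R := if (p < t <= p + m)%N then m%:R^-1 else 0.

Lemma sum_block (F : R -> R) p m n : (p + m <= n)%N ->
  \sum_(1 <= t < n.+1) F (block p m t) = F m%:R^-1 *+ m + F 0 *+ (n - m).
Proof.
move=> pmn; rewrite (@big_cat_nat _ _ _ p.+1) //=; last lia.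
rewrite [X in _ + X](@big_cat_nat _ _ _ (p + m).+1) //=; last lia.
rewrite (@eq_big_nat _ _ _ 1 p.+1 _ (fun=> F 0)); last first.
  by move=> t /andP [t1 tp]; rewrite /block ifF //; apply/negbTE; lia.
rewrite (@eq_big_nat _ _ _ p.+1 _ _ (fun=> F m%:R^-1)); last first.
  by move=> t /andP [t1 tp]; rewrite /block ifT //; lia.
rewrite (@eq_big_nat _ _ _ (p + m).+1 _ _ (fun=> F 0)); last first.
  by move=> t /andP [t1 tp]; rewrite /block ifF //; apply/negbTE; lia.
rewrite !sumr_const_nat addrCA -mulrnDr; congr (_ *+ _ + _ *+ _); lia.
Qed.

Lemma sum_block_mul p m n (x : nat -> R) : (p + m <= n)%N ->
  \sum_(1 <= t < n.+1) block p m t * x t = m%:R^-1 * \sum_(1 <= t < m.+1) x (t + p).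
Proof.
move=> pmn; rewrite (@big_cat_nat _ _ _ p.+1) //=; last lia.
rewrite [X in _ + X](@big_cat_nat _ _ _ (p + m).+1) //=; last lia.
rewrite big1_seq ?add0r => [|t]; last first.
  by rewrite mem_index_iota => tp; rewrite /block ifF ?mul0r //; apply/negbTE; lia.
rewrite [X in _ + X]big1_seq ?addr0 => [|t]; last first.
  by rewrite mem_index_iota => tp; rewrite /block ifF ?mul0r //; apply/negbTE; lia.
rewrite -{1}[p.+1]add1n big_addn (_ : ((p + m).+1 - p = m.+1)%N); last lia.
rewrite mulr_sumr; apply: eq_big_nat => t tm.
by rewrite /block ifT //; lia.
Qed.

Lemma sum_block_sqr p m n : (p + m <= n)%N -> (0 < m)%N ->
  \sum_(1 <= t < n.+1) block p m t ^+ 2 = m%:R^-1.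
Proof.
move=> pmn m0; rewrite (sum_block (fun c => c ^+ 2)) // expr0n mul0rn addr0.
by rewrite -mulr_natr; field; rewrite pnatr_eq0 -lt0n.
Qed.

Lemma sum_sub_block_sqr p m n : (p + m <= n)%N -> (0 < m)%N ->
  \sum_(1 <= t < n.+1) (n%:R^-1 - block p m t) ^+ 2 = (n - m)%:R / (n%:R * m%:R).
Proof.
move=> pmn m0; rewrite (sum_block (fun c => (n%:R^-1 - c) ^+ 2)) //.
have n0 : n%:R != 0 :> R by rewrite pnatr_eq0 -lt0n; lia.
have {}m0 : m%:R != 0 :> R by rewrite pnatr_eq0 -lt0n.
rewrite subr0 -[_ *+ m]mulr_natr -[_ *+ (n - m)]mulr_natr natrB; last lia.
by field; rewrite ?n0 ?m0.
Qed.

End weighted_sums.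

Section sample_autocovariances.
Context dT (T : measurableType dT) (R : realType) (P : probability T R).
Variables (d : nat) (X : int -> 'I_d -> T -> R) (n k : nat).
Hypothesis kn : (k < n)%N.

Local Notation m := (n - k)%N.
Local Notation lc := (lincomb X (index_iota 1 n.+1)).

Lemma smean_lincomb j : smean X n j = lc (fun=> n%:R^-1) j.
Proof. by apply: funext => w; rewrite /smean /lincomb mulr_sumr. Qed.

Lemma lincomb_mean_sub_block p j w :
  lc (fun t => n%:R^-1 - block p m t) j w = smean X n j w - lc (block p m) j w.
Proof.
by rewrite smean_lincomb /lincomb -sumrB; apply: eq_bigr => t _; rewrite mulrBl.
Qed.

Lemma acov_tilde_sub_hat a b w :
  acov_tilde X n a b k w - acov_hat X n a b k w =
  m%:R / n%:R * (lc (fun t => n%:R^-1 - block k m t) a w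
                 * lc (fun t => n%:R^-1 - block 0 m t) b w
                 - lc (block k m) a w * lc (block 0 m) b w).
Proof.
have m0 : m%:R != 0 :> R by rewrite pnatr_eq0 -lt0n subn_gt0.
have n0 : n%:R != 0 :> R by rewrite pnatr_eq0 -lt0n; lia.
have addn0_sum : \sum_(1 <= t < m.+1) X (t + 0)%:Z b w = \sum_(1 <= t < m.+1) X t%:Z b w.
  by apply: eq_bigr => t _; rewrite addn0.
rewrite !lincomb_mean_sub_block /lincomb !sum_block_mul ?addn0_sum; [|lia|lia].
rewrite /acov_tilde /acov_hat -mulrBr sumr_centred_mul /index_iota size_iota subSS subn0.
by field; rewrite ?n0 ?m0.
Qed.

Lemma acov_hat_Lfun1 a b : weakly_stationary_centred P X ->
  acov_hat X n a b k \in Lfun P 1.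
Proof.
move=> HX; apply: LfunZ => //; apply: Lfun_sum => // t.
by apply: Lfun2_mul_Lfun1; exact: process_Lfun2.
Qed.

Lemma acov_tilde_Lfun1 a b : weakly_stationary_centred P X ->
  acov_tilde X n a b k \in Lfun P 1.
Proof.
move=> HX; have smean2 j : smean X n j \in Lfun P 2%:E.
  by rewrite smean_lincomb; exact: lincomb_Lfun2.
have centred2 s j : (fun w => X s j w - smean X n j w) \in Lfun P 2%:E.
  by apply: LfunB; [exact: lee1n | exact: process_Lfun2 | exact: smean2].
apply: LfunZ => //; apply: Lfun_sum => // t.
exact: Lfun2_mul_Lfun1.
Qed.

Lemma mean_abs_acov_tilde_sub_hat_le a b :
  weakly_stationary_centred P X ->
  Zabs_summable (acov P X a a) -> Zabs_summable (acov P X b b) ->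
  mean P (fun w => `|acov_tilde X n a b k w - acov_hat X n a b k w|)
  <= (n + k)%:R / n%:R ^+ 2 * (Num.sqrt (Zsum (fun u => `|acov P X a a u|))
                              * Num.sqrt (Zsum (fun u => `|acov P X b b u|))).
Proof.
move=> HX sa sb.
have us : uniq (index_iota 1 n.+1) by exact: iota_uniq.
have m0 : (0 < m)%N by rewrite subn_gt0.
have km : (k + m <= n)%N by lia.
have zm : (0 + m <= n)%N by lia.
pose F := lc (fun t => n%:R^-1 - block k m t) a.
pose G := lc (fun t => n%:R^-1 - block 0 m t) b.
pose A := lc (block k m) a.
pose B := lc (block 0 m) b.
have FG1 : (fun w => F w * G w) \in Lfun P 1.
  by apply: Lfun2_mul_Lfun1; exact: lincomb_Lfun2.
have AB1 : (fun w => A w * B w) \in Lfun P 1.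
  by apply: Lfun2_mul_Lfun1; exact: lincomb_Lfun2.
have FG_le := mean_abs_lincomb_mul_le HX us sa sb
  (sum_sub_block_sqr km m0) (sum_sub_block_sqr zm m0).
have AB_le := mean_abs_lincomb_mul_le HX us sa sb
  (sum_block_sqr km m0) (sum_block_sqr zm m0).
rewrite (_ : (fun w => _) = fun w => m%:R / n%:R * `|F w * G w - A w * B w|); last first.
  by apply: funext => w; rewrite acov_tilde_sub_hat normrM ger0_norm.
rewrite meanZ; last exact/Lfun_norm/LfunB.
apply: le_trans (ler_wpM2l _ (le_trans (mean_normB_le FG1 AB1) (lerD FG_le AB_le))) _ => //.
have n0 : n%:R != 0 :> R by rewrite pnatr_eq0 -lt0n; lia.
have {}m0 : m%:R != 0 :> R by rewrite pnatr_eq0 -lt0n.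
rewrite natrB ?(ltnW kn) // in m0.
rewrite subKn ?(ltnW kn) // natrD natrB ?(ltnW kn) // le_eqVlt; apply/orP; left; apply/eqP.
by field; rewrite ?n0 ?m0.
Qed.

End sample_autocovariances.

Lemma sharper_bound_le (R : realType) (n k CA CB DA DB : R) :
  0 < n -> 0 <= k -> 0 <= CA -> 0 <= CB -> 0 <= DA -> 0 <= DB ->
  Num.sqrt n * ((n + k) / n ^+ 2 * (Num.sqrt CA * Num.sqrt CB))
  <= (Num.sqrt n)^-1 * Num.sqrt CA * Num.sqrt CB
     + k / (n * Num.sqrt n) * Num.sqrt (CA + n^-1 * DA) * Num.sqrt (CB + n^-1 * DB).
Proof.
move=> n0 k0 CA0 CB0 DA0 DB0.
have sn0 : 0 < Num.sqrt n by rewrite sqrtr_gt0.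
have -> : Num.sqrt n * ((n + k) / n ^+ 2 * (Num.sqrt CA * Num.sqrt CB))
    = ((Num.sqrt n)^-1 + k / (n * Num.sqrt n)) * (Num.sqrt CA * Num.sqrt CB).
  rewrite mulrA; congr (_ * _); have := sqr_sqrtr (ltW n0).
  by set s := Num.sqrt n => <-; field; rewrite gt_eqF.
have sqrt_le C D : 0 <= C -> 0 <= D -> Num.sqrt C <= Num.sqrt (C + n^-1 * D).
  by move=> C0 D0; rewrite ler_wsqrtr // lerDl mulr_ge0 // invr_ge0 ltW.
rewrite mulrDl; apply: lerD; first by rewrite mulrA lexx.
rewrite -mulrA; apply: ler_wpM2l; first by rewrite divr_ge0 // mulr_ge0 // ltW.
by apply: ler_pM; rewrite ?sqrtr_ge0 ?sqrt_le.
Qed.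

Theorem lemmaC1 (dT : measure_display) (T : measurableType dT) (R : realType)
  (P : probability T R) (d : nat) (X : int -> 'I_d -> T -> R) (a b : 'I_d)
  (n k : nat) :
  weakly_stationary_centred P X ->
  Zabs_summable (fun u => `|u|%:~R * acov P X a a u) ->
  Zabs_summable (fun u => `|u|%:~R * acov P X b b u) ->
  (k < n)%N ->
  (dW P (fun w => Num.sqrt n%:R * (acov_tilde X n a b k w - acov P X a b k%:Z))%R
        (fun w => Num.sqrt n%:R * (acov_hat X n a b k w - acov P X a b k%:Z))%R
   <= (((Num.sqrt n%:R)^-1
         * Num.sqrt (Zsum (fun u => `|acov P X a a u|))
         * Num.sqrt (Zsum (fun u => `|acov P X b b u|))
       + k%:R / (n%:R * Num.sqrt n%:R)
         * Num.sqrt (Zsum (fun u => `|acov P X a a u|)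
                     + n%:R^-1 * Zsum (fun u => `|u|%:~R * `|acov P X a a u|))
         * Num.sqrt (Zsum (fun u => `|acov P X b b u|)
                     + n%:R^-1 * Zsum (fun u => `|u|%:~R * `|acov P X b b u|)))%R)%:E)%E.
Proof.
move=> HX wa wb kn.
have sa := Zabs_summable_weighted wa; have sb := Zabs_summable_weighted wb.
have diff1 : (fun w => `|acov_tilde X n a b k w - acov_hat X n a b k w|) \in Lfun P 1.
  by apply/Lfun_norm/LfunB; rewrite // ?acov_tilde_Lfun1 ?acov_hat_Lfun1.
have scaled1 (f : T -> R) : f \in Lfun P 1 ->
    (fun w => Num.sqrt n%:R * (f w - acov P X a b k%:Z)) \in Lfun P 1.
  by move=> f1; apply/LfunZ/LfunB => //; exact: Lfun_cst.
apply: le_trans (dW_le_mean_abs (scaled1 _ (acov_tilde_Lfun1 _ _ _ _ HX))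
                                (scaled1 _ (acov_hat_Lfun1 _ _ _ _ HX))) _.
rewrite lee_fin (_ : (fun w => _) = fun w => Num.sqrt n%:R
    * `|acov_tilde X n a b k w - acov_hat X n a b k w|); last first.
  apply: funext => w; rewrite -mulrBr opprB addrA subrK normrM.
  by rewrite ger0_norm ?sqrtr_ge0.
rewrite meanZ //.
apply: le_trans (ler_wpM2l (sqrtr_ge0 _) (mean_abs_acov_tilde_sub_hat_le kn HX sa sb)) _.
rewrite natrD; apply: sharper_bound_le;
  by rewrite ?ltr0n ?ler0n ?Zsum_abs_ge0 ?Zsum_weighted_ge0 //; lia.
Qed.
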